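(* For all integers $n\ge 0$, all $\mathbf{s}=(s_1,\dots,s_d)\in\mathbb{N}^d$ and all $y\in[-\pi/2,\pi/2]$, \[ \sum_{n_1>\cdots>n_d>n}\frac{a_{n_1}(\sin y)}{(2n_1)^{s_1}\cdots(2n_d)^{s_d}} =\cot y\,\frac{d}{dy}\int_0^y p_{s_1}\circ\cdots\circ p_{s_d}\circ a_n(\sin t)\tan t\,dt , \] where for $y=\pm\pi/2$ the right-hand side is understood as the limit as $y\to\pm\pi/2$.
   Context: $\mathbb{N}=\{1,2,\dots\}$. Set $a_0(x)=1$ and $a_n(x)=\frac{1}{4^n}\binom{2n}{n}x^{2n}$ for $n\ge1$. Iterated integral notation: for 1-forms $f_1(t)dt,\dots,f_r(t)dt$, $\int_0^y f_1(t)dt\circ\cdots\circ f_r(t)dt:=\int_{y>t_1>\cdots>t_r>0}f_1(t_1)\cdots f_r(t_r)\,dt_1\cdots dt_r$ (the symbol $\circ$ may be omitted); $(\omega)^k$ denotes $\omega$ repeated $k$ times ($k=0$: empty). Words mixing functions and 1-forms are expanded by linearity using the rule that for functions $F,G$ and 1-forms $f\,dt$, $g\,dt$: $[F+f\,dt\circ G]\circ g\,dt:=F g\,dt+f\,dt\circ (Gg)\,dt$; i.e. a function placed after $\circ$ multiplies the 1-form that follows it. For $s\in\mathbb{N}$ define $p_s(t):=\tan t\,dt\,\left(\cot t\,dt\right)^{s-1}\left(1-\csc t\,dt\circ\sec t\right)$. *)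

From Stdlib Require Import Reals List.
From Coquelicot Require Import Coquelicot.
Import ListNotations.
Open Scope R_scope.

Definition a_coef (n : nat) (x : R) : R :=
  / 4 ^ n * Binomial.C (2 * n) n * x ^ (2 * n).

(* Multiple sum  sum_{n_1 > ... > n_d > m} a_{n_1}(x) / ((2n_1)^{s_1} ... (2n_d)^{s_d}),
   computed with the index list given in REVERSED order [s_d; ...; s_1]. *)
Fixpoint msum_rev (l : list nat) (x : R) (m : nat) : R :=
  match l with
  | [] => a_coef m x
  | s :: l' => Series (fun j => let k := (m + 1 + j)%nat in
                  msum_rev l' x k / (2 * INR k) ^ s)
  end.

Definition msum (s : list nat) (x : R) (n : nat) : R := msum_rev (rev s) x n.

Definition cotf (t : R) : R := cos t / sin t.
Definition cscf (t : R) : R := / sin t.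
Definition secf (t : R) : R := / cos t.

(* A word of 1-forms f_1(t)dt ... f_r(t)dt is a list [f_1; ...; f_r].
   Iterated (oriented) integral:
   iint [] y = 1,  iint (f :: w) y = int_0^y f(t) * iint w t dt. *)
Fixpoint iint (w : list (R -> R)) (y : R) : R :=
  match w with
  | [] => 1
  | f :: w' => RInt (fun t => f t * iint w' t) 0 y
  end.

Definition mulhead (g : R -> R) (w : list (R -> R)) : list (R -> R) :=
  match w with
  | [] => []
  | h :: w' => (fun t => g t * h t) :: w'
  end.

(* Linear expansion of p_{s_1} o ... o p_{s_d} o (g(t) dt) into a signed
   list of words, where
   p_s = tan dt (cot dt)^{s-1} (1 - csc dt o sec), the trailing function
   sec multiplying the following 1-form. *)
Fixpoint expand (s : list nat) (g : R -> R) : list (R * list (R -> R)) :=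
  match s with
  | [] => [(1, [g])]
  | k :: s' =>
      let W := expand s' g in
      let pre := tan :: repeat cotf (k - 1) in
      map (fun cw => (fst cw, pre ++ snd cw)) W ++
      map (fun cw => (- fst cw, pre ++ cscf :: mulhead secf (snd cw))) W
  end.

Definition lin_iint (L : list (R * list (R -> R))) (y : R) : R :=
  fold_right (fun cw acc => fst cw * iint (snd cw) y + acc) 0 L.

Definition rhs (s : list nat) (n : nat) (y : R) : R :=
  cotf y * Derive (lin_iint (expand s (fun t => a_coef n (sin t) * tan t))) y.

From Stdlib Require Import Reals List Lra Lia Arith.
From Coquelicot Require Import Coquelicot.
Import ListNotations.
Open Scope R_scope.

(* Put [z = sin^2 y], so that [a_N(sin y) = alpha_N z^N] with [alpha_N = 4^-N binom(2N, N)].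
   All terms of the multiple sum are nonnegative, so it can be rearranged into a single power
   series [B_c(z) = sum_N alpha_N c_N z^N], where [c_N] is the total weight of the chains
   [N = n_1 > ... > n_d > n].  On the other side, if a combination of iterated integrals has
   integrand [tan y B_c(sin^2 y)], then prefixing it with [p_k] gives integrand
   [tan y B_c'(sin^2 y)] with [c'_N = (c_0 + ... + c_(N-1)) / (2N)^k], which is exactly how
   the chain weights grow when a new largest index is added.  This rests on
   [int_0^y cot t F(sin^2 t) dt = sum_N f_N sin^(2N) y / (2N)] and on two identities between
   [B_c] and the series of the partial sums of [c].  Hence [cot y] times the derivative of the
   right-hand side is [B_c(sin^2 y)]; at [y = +-pi/2], where [sin^2 y = 1], Abel's theorem
   gives the limits. *)

(** * Finite sums and a triangular Tonelli theorem *)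

(* [n] terms, one fewer than Coquelicot's [sum_n f n]. *)
Fixpoint psum (f : nat -> R) (n : nat) : R :=
  match n with O => 0 | S k => psum f k + f k end.

Lemma psum_0 f : psum f 0 = 0.
Proof. reflexivity. Qed.

Lemma psum_S f n : psum f (S n) = psum f n + f n.
Proof. reflexivity. Qed.

Arguments psum : simpl never.

Lemma psum_ext f g n : (forall i, (i < n)%nat -> f i = g i) -> psum f n = psum g n.
Proof.
  induction n as [|n IH]; intros H; [reflexivity|].
  rewrite !psum_S, IH, H; auto with arith.
Qed.

Lemma psum_scal c f n : psum (fun i => c * f i) n = c * psum f n.
Proof. induction n; rewrite ?psum_0, ?psum_S; [ring|]. rewrite IHn; ring. Qed.

Lemma psum_plus f g n : psum (fun i => f i + g i) n = psum f n + psum g n.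
Proof. induction n; rewrite ?psum_0, ?psum_S; [ring|]. rewrite IHn; ring. Qed.

Lemma psum_le f g n : (forall i, f i <= g i) -> psum f n <= psum g n.
Proof. intros H; induction n; rewrite ?psum_0, ?psum_S; [lra|]. specialize (H n); lra. Qed.

Lemma psum_nonneg f n : (forall i, 0 <= f i) -> 0 <= psum f n.
Proof. intros H; induction n; rewrite ?psum_0, ?psum_S; [lra|]. specialize (H n); lra. Qed.

Lemma psum_le_const f c n : (forall i, f i <= c) -> psum f n <= INR n * c.
Proof.
  intros H; induction n; rewrite ?psum_0, ?psum_S; [simpl; lra|].
  rewrite S_INR. specialize (H n). lra.
Qed.

Lemma psum_abs_le1 c n : (forall i, Rabs (c i) <= 1) -> Rabs (psum c n) <= INR n.
Proof.
  intros H; induction n; rewrite ?psum_0, ?psum_S; [rewrite Rabs_R0; simpl; lra|].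
  rewrite S_INR. eapply Rle_trans; [apply Rabs_triang|]. specialize (H n). lra.
Qed.

Lemma psum_le_mono f a b : (forall i, 0 <= f i) -> (a <= b)%nat -> psum f a <= psum f b.
Proof. intros H Hab. induction Hab; [lra|]. rewrite psum_S. specialize (H m); lra. Qed.

Lemma psum_eq_0 f n : (forall i, (i < n)%nat -> f i = 0) -> psum f n = 0.
Proof.
  intros H; induction n; rewrite ?psum_0, ?psum_S; auto.
  rewrite IHn, H; auto with arith; ring.
Qed.

Lemma psum_tail f n b : (forall i, (n <= i)%nat -> f i = 0) -> (n <= b)%nat -> psum f b = psum f n.
Proof. intros H Hb. induction Hb; auto. rewrite psum_S, IHHb, H by lia. ring. Qed.

Lemma psum_single f m n : (forall i, i <> m -> f i = 0) -> (m < n)%nat -> psum f n = f m.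
Proof.
  intros H Hmn. induction Hmn; rewrite psum_S.
  - rewrite psum_eq_0. ring. intros; apply H; lia.
  - rewrite IHHmn, (H m0) by lia. ring.
Qed.

Lemma psum_comm (g : nat -> nat -> R) J K :
  psum (fun j => psum (g j) K) J = psum (fun k => psum (fun j => g j k) J) K.
Proof.
  induction J; rewrite ?psum_0, ?psum_S.
  - symmetry. apply psum_eq_0. intros; apply psum_0.
  - rewrite IHJ, <- psum_plus. apply psum_ext. intros; rewrite psum_S; reflexivity.
Qed.

Lemma is_series_psum a l : is_series a l <-> is_lim_seq (psum a) l.
Proof.
  assert (E : forall n, sum_n a n = psum a (S n)).
  { induction n; [rewrite sum_O, psum_S, psum_0; apply eq_sym, Rplus_0_l|].
    rewrite sum_Sn, IHn, (psum_S _ (S n)). reflexivity. }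
  split; intros H.
  - apply is_lim_seq_incr_1. apply (is_lim_seq_ext (sum_n a)); [exact E|exact H].
  - apply is_lim_seq_incr_1, (is_lim_seq_ext _ (sum_n a)) in H; [exact H|].
    intros; symmetry; apply E.
Qed.

Lemma psum_le_series f l J : is_series f l -> (forall n, 0 <= f n) -> psum f J <= l.
Proof.
  intros H Hp. apply is_series_psum in H.
  apply (is_lim_seq_incr_n _ J) in H.
  assert (Hle : Rbar_le (psum f J) l).
  { apply (is_lim_seq_le (fun _ => psum f J) (fun n => psum f (n + J))); auto.
    intros; apply psum_le_mono; auto; lia. apply is_lim_seq_const. }
  exact Hle.
Qed.

Lemma is_series_single f m : (forall i, i <> m -> f i = 0) -> is_series f (f m).
Proof.
  intros H. apply is_series_psum, (is_lim_seq_incr_n _ (S m)).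
  apply (is_lim_seq_ext (fun _ => f m)). intros n. symmetry; apply psum_single; auto; lia.
  apply is_lim_seq_const.
Qed.

Lemma is_lim_seq_psum (g : nat -> nat -> R) (v : nat -> R) J :
  (forall j, is_lim_seq (g j) (v j)) -> is_lim_seq (fun K => psum (fun j => g j K) J) (psum v J).
Proof.
  intros H. induction J; rewrite ?psum_0.
  - apply (is_lim_seq_ext (fun _ => 0)). intros; symmetry; apply psum_0. apply is_lim_seq_const.
  - apply (is_lim_seq_ext (fun K => psum (fun j => g j K) J + g J K)).
    { intros; rewrite psum_S; reflexivity. }
    rewrite psum_S. apply is_lim_seq_plus'; auto.
Qed.

Section TriangularTonelli.

Variables (g : nat -> nat -> R) (v : nat -> R).
Hypothesis g_nonneg : forall j k, 0 <= g j k.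
Hypothesis g_lower : forall j k, (k < j)%nat -> g j k = 0.
Hypothesis g_rows : forall j, is_series (g j) (v j).

Let col (k : nat) : R := psum (fun j => g j k) (S k).

Hypothesis col_summable : ex_series col.

Let col_sum_eq k J : (k < J)%nat -> col k = psum (fun j => g j k) J.
Proof. intros H. symmetry. apply psum_tail. intros; apply g_lower; lia. lia. Qed.

Lemma psum_col_le_rows J : psum col J <= psum v J.
Proof.
  rewrite (psum_ext _ (fun k => psum (fun j => g j k) J)) by (intros; apply col_sum_eq; auto).
  rewrite <- psum_comm. apply psum_le. intros j. apply psum_le_series; auto.
Qed.

Lemma psum_rows_le_series_col J : psum v J <= Series col.
Proof.
  assert (Hcol : is_series col (Series col)) by (apply Series_correct; auto).
  assert (Hcol_nonneg : forall k, 0 <= col k) by (intros; apply psum_nonneg; auto).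
  assert (Hl : is_lim_seq (fun K => psum (fun j => psum (g j) K) J) (psum v J)).
  { apply is_lim_seq_psum. intros j. apply is_series_psum. auto. }
  assert (Hle : Rbar_le (psum v J) (Series col)).
  { refine (is_lim_seq_le _ (fun _ => Series col) _ _ _ Hl (is_lim_seq_const _)).
    intros K. rewrite psum_comm.
    apply Rle_trans with (psum col K); [|apply psum_le_series; auto].
    apply psum_le. intros k. unfold col.
    destruct (le_lt_dec J (S k)).
    - apply psum_le_mono; auto.
    - right. apply psum_tail; [intros; apply g_lower; lia | lia]. }
  exact Hle.
Qed.

Theorem is_series_rows_Series_col : is_series v (Series col).
Proof.
  assert (Hcol : is_series col (Series col)) by (apply Series_correct; auto).
  apply is_series_psum. apply is_series_psum in Hcol.
  apply (is_lim_seq_le_le (psum col) _ (fun _ => Series col)); auto.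
  - intros; split; [apply psum_col_le_rows|apply psum_rows_le_series_col].
  - apply is_lim_seq_const.
Qed.

End TriangularTonelli.

(** * The coefficients of the multiple sum *)

Definition alpha (N : nat) : R := / 4 ^ N * Binomial.C (2 * N) N.

Lemma a_coef_alpha N x : a_coef N x = alpha N * (x ^ 2) ^ N.
Proof. unfold a_coef, alpha. rewrite <- pow_mult. reflexivity. Qed.

Lemma alpha_0 : alpha 0 = 1.
Proof. unfold alpha, Binomial.C. simpl. field. Qed.

Lemma alpha_S N : alpha (S N) = alpha N * (2 * INR N + 1) / (2 * INR N + 2).
Proof.
  unfold alpha, Binomial.C.
  replace (2 * S N)%nat with (S (S (2 * N))) by lia.
  replace (S (S (2 * N)) - S N)%nat with (S N) by lia.
  replace (2 * N - N)%nat with N by lia.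
  rewrite !fact_simpl, !mult_INR, !S_INR, mult_INR. simpl (INR 2).
  assert (0 < INR (fact N)) by apply lt_0_INR, lt_O_fact.
  assert (0 < INR (fact (2 * N))) by apply lt_0_INR, lt_O_fact.
  assert (0 <= INR N) by apply pos_INR.
  simpl pow. field. repeat split; try lra. apply pow_nonzero; lra.
Qed.

Lemma alpha_pos N : 0 < alpha N.
Proof.
  induction N; [rewrite alpha_0; lra|]. rewrite alpha_S.
  pose proof (pos_INR N). apply Rdiv_lt_0_compat; [apply Rmult_lt_0_compat|]; lra.
Qed.

Lemma alpha_le1 N : alpha N <= 1.
Proof.
  induction N; [rewrite alpha_0; lra|]. rewrite alpha_S.
  pose proof (pos_INR N). pose proof (alpha_pos N).
  apply Rle_trans with (alpha N); auto.
  apply Rmult_le_reg_r with (2 * INR N + 2); [lra|].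
  unfold Rdiv. rewrite Rmult_assoc, Rinv_l by lra. nra.
Qed.

(* [chain_weight [s_d; ...; s_1] m N] is the sum of
   [1 / ((2 n_1)^s_1 ... (2 n_d)^s_d)] over all chains [N = n_1 > ... > n_d > m];
   the list is reversed, as in [msum_rev]. *)
Fixpoint chain_weight (l : list nat) (m N : nat) : R :=
  match l with
  | [] => if Nat.eqb N m then 1 else 0
  | s :: l' => psum (fun j => chain_weight l' (m + 1 + j) N / (2 * INR (m + 1 + j)) ^ s) (S N)
  end.

Lemma chain_weight_nonneg l m N : 0 <= chain_weight l m N.
Proof.
  revert m. induction l; intros m; simpl.
  - destruct (Nat.eqb N m); lra.
  - apply psum_nonneg. intros j. apply Rdiv_le_0_compat; auto.
    apply pow_lt. assert (0 < INR (m + 1 + j)) by (apply lt_0_INR; lia). lra.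
Qed.

Lemma chain_weight_below l m N : (N < m)%nat -> chain_weight l m N = 0.
Proof.
  revert m. induction l; intros m H; simpl.
  - destruct (Nat.eqb_spec N m); auto. lia.
  - apply psum_eq_0. intros i _. rewrite IHl by lia. unfold Rdiv; ring.
Qed.

Lemma chain_weight_nil_psum m N :
  psum (fun j => chain_weight [] m j) N = if Nat.ltb m N then 1 else 0.
Proof.
  destruct (Nat.ltb_spec m N).
  - rewrite (psum_single _ m); [simpl; rewrite Nat.eqb_refl; reflexivity| |auto].
    intros i Hi. simpl. destruct (Nat.eqb_spec i m); [lia|auto].
  - apply psum_eq_0. intros i Hi. simpl. destruct (Nat.eqb_spec i m); [lia|auto].
Qed.

(* Appending [k] prolongs every chain by a new largest element [N]. *)
Lemma chain_weight_app l k m N :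
  chain_weight (l ++ [k]) m N = psum (chain_weight l m) N / (2 * INR N) ^ k.
Proof.
  revert m. induction l as [|s l IH]; intros m.
  - simpl app. rewrite chain_weight_nil_psum. cbn [chain_weight].
    destruct (Nat.ltb_spec m N).
    + rewrite (psum_single _ (N - m - 1)); [|intros i Hi|lia].
      * replace (m + 1 + (N - m - 1))%nat with N by lia. rewrite Nat.eqb_refl. reflexivity.
      * destruct (Nat.eqb_spec N (m + 1 + i)); [lia|]. unfold Rdiv; ring.
    + rewrite psum_eq_0; [unfold Rdiv; ring|]. intros i Hi.
      destruct (Nat.eqb_spec N (m + 1 + i)); [lia|]. unfold Rdiv; ring.
  - cbn [app chain_weight].
    set (w j := / (2 * INR (m + 1 + j)) ^ s).
    rewrite (psum_ext _ (fun j => psum (fun i => / (2 * INR N) ^ k *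
                 (chain_weight l (m + 1 + j) i * w j)) N)).
    2:{ intros j _. rewrite IH, psum_scal.
        rewrite (psum_ext (fun i => chain_weight l (m + 1 + j) i * w j)
                          (fun i => w j * chain_weight l (m + 1 + j) i)) by (intros; ring).
        rewrite psum_scal. unfold w, Rdiv. ring. }
    rewrite psum_comm.
    transitivity (/ (2 * INR N) ^ k *
      psum (fun i => psum (fun j => chain_weight l (m + 1 + j) i * w j) (S i)) N).
    + rewrite <- psum_scal. apply psum_ext. intros i Hi. rewrite psum_scal. f_equal.
      apply psum_tail; [|lia]. intros j Hj. rewrite chain_weight_below by lia. ring.
    + unfold Rdiv. rewrite Rmult_comm. f_equal.
Qed.

Lemma div_pow_le_div (a x : R) k : 0 <= a -> 1 <= x -> (1 <= k)%nat -> a / x ^ k <= a / x.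
Proof.
  intros Ha Hx Hk. apply Rmult_le_compat_l; auto. apply Rinv_le_contravar; [lra|].
  destruct k as [|k]; [lia|]. simpl. pose proof (pow_R1_Rle x k Hx). nra.
Qed.

Lemma chain_weight_le1 l m N : List.Forall (fun k => (1 <= k)%nat) l -> chain_weight l m N <= 1.
Proof.
  revert N. induction l as [|k l IH] using rev_ind; intros N H.
  - simpl. destruct (Nat.eqb N m); lra.
  - apply Forall_app in H as [Hl Hk]. inversion Hk; subst.
    rewrite chain_weight_app. destruct N as [|N].
    + rewrite psum_0. unfold Rdiv; rewrite Rmult_0_l; lra.
    + assert (HN : 1 <= INR (S N)) by (apply (le_INR 1); lia).
      eapply Rle_trans; [apply div_pow_le_div; auto; [apply psum_nonneg, chain_weight_nonneg|lra]|].
      apply Rle_trans with (INR (S N) * 1 / (2 * INR (S N))).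
      * apply Rmult_le_compat_r; [apply Rlt_le, Rinv_0_lt_compat; lra|].
        apply psum_le_const. intros; apply IH; auto.
      * replace (INR (S N) * 1 / (2 * INR (S N))) with (/ 2) by (field; lra). lra.
Qed.

Lemma chain_weight_abs_le1 l m N : List.Forall (fun k => (1 <= k)%nat) l ->
  Rabs (chain_weight l m N) <= 1.
Proof.
  intros Hl. rewrite Rabs_pos_eq by apply chain_weight_nonneg. apply chain_weight_le1, Hl.
Qed.

(* A majorant of the chain weights: as [psum gamma N = 4 N gamma N], a bound
   [chain_weight <= B gamma] survives the division by [2N] in [chain_weight_app],
   and [alpha N gamma N ~ N^(-5/4)] is summable. *)
Fixpoint gamma (N : nat) : R :=
  match N with O => 1 | S n => gamma n * (4 * INR n + 1) / (4 * INR n + 4) end.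

Lemma gamma_pos N : 0 < gamma N.
Proof.
  induction N; simpl; [lra|]. pose proof (pos_INR N).
  apply Rdiv_lt_0_compat; [apply Rmult_lt_0_compat|]; lra.
Qed.

Lemma psum_gamma N : psum gamma N = 4 * INR N * gamma N.
Proof.
  induction N; [rewrite psum_0; simpl; ring|].
  rewrite psum_S, IHN. simpl gamma. rewrite S_INR. pose proof (pos_INR N). field. lra.
Qed.

Lemma chain_weight_le_gamma l m : List.Forall (fun k => (1 <= k)%nat) l ->
  exists B, 0 <= B /\ forall N, chain_weight l m N <= B * gamma N.
Proof.
  induction l as [|k l IH] using rev_ind; intros H.
  - exists (/ gamma m). split; [apply Rlt_le, Rinv_0_lt_compat, gamma_pos|].
    intros N. pose proof (gamma_pos N). pose proof (gamma_pos m).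
    simpl. destruct (Nat.eqb_spec N m).
    + subst. rewrite Rinv_l; lra.
    + apply Rlt_le, Rmult_lt_0_compat; [apply Rinv_0_lt_compat|]; lra.
  - apply Forall_app in H as [Hl Hk]. inversion Hk; subst.
    destruct (IH Hl) as [B [HB HBN]].
    exists (2 * B). split; [lra|]. intros N. rewrite chain_weight_app. destruct N as [|N].
    + rewrite psum_0. unfold Rdiv; rewrite Rmult_0_l. pose proof (gamma_pos 0). nra.
    + assert (HN : 1 <= INR (S N)) by (apply (le_INR 1); lia).
      eapply Rle_trans; [apply div_pow_le_div; auto; [apply psum_nonneg, chain_weight_nonneg|lra]|].
      apply Rle_trans with (psum (fun i => B * gamma i) (S N) / (2 * INR (S N))).
      * apply Rmult_le_compat_r; [apply Rlt_le, Rinv_0_lt_compat; lra|]. apply psum_le; auto.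
      * rewrite psum_scal, psum_gamma. right. field. lra.
Qed.

Lemma alpha_gamma_step N : (1 <= N)%nat ->
  alpha N * gamma N + 16 * INR (S N) * (alpha (S N) * gamma (S N))
  <= 16 * INR N * (alpha N * gamma N).
Proof.
  intros HN. rewrite alpha_S. simpl gamma. rewrite S_INR.
  assert (HI : 1 <= INR N) by (apply (le_INR 1); lia).
  pose proof (alpha_pos N). pose proof (gamma_pos N).
  set (a := alpha N) in *. set (g := gamma N) in *. set (n := INR N) in *.
  assert (0 < a * g) by (apply Rmult_lt_0_compat; auto).
  assert (0 <= a * g * (n - 1)) by (apply Rmult_le_pos; lra).
  replace (a * (2 * n + 1) / (2 * n + 2) * (g * (4 * n + 1) / (4 * n + 4)))
    with (a * g * ((2 * n + 1) * (4 * n + 1)) / (8 * (n + 1) * (n + 1))) by (field; lra).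
  apply Rmult_le_reg_r with (8 * (n + 1)); [lra|].
  replace ((a * g + 16 * (n + 1) * (a * g * ((2 * n + 1) * (4 * n + 1)) / (8 * (n + 1) * (n + 1))))
             * (8 * (n + 1)))
    with (a * g * (8 * (n + 1) + 16 * ((2 * n + 1) * (4 * n + 1)))) by (field; lra).
  nra.
Qed.

Lemma ex_series_alpha_gamma : ex_series (fun N => alpha N * gamma N).
Proof.
  set (d N := alpha N * gamma N).
  assert (dp : forall N, 0 < d N)
    by (intros; apply Rmult_lt_0_compat; [apply alpha_pos|apply gamma_pos]).
  set (M := d 0%nat + 32 * d 1%nat).
  assert (bnd : forall K, psum d (S (S K)) + 16 * INR (S (S K)) * d (S (S K)) <= M).
  { induction K.
    - rewrite !psum_S, psum_0. pose proof (alpha_gamma_step 1 (le_n 1)). pose proof (dp 1%nat).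
      simpl INR in *. unfold M, d in *. lra.
    - rewrite psum_S. pose proof (alpha_gamma_step (S (S K)) ltac:(lia)). unfold d in *. lra. }
  assert (Hf : ex_finite_lim_seq (psum d)).
  { apply ex_finite_lim_seq_incr with M.
    - intros n. rewrite psum_S. specialize (dp n). lra.
    - intros n. apply Rle_trans with (psum d (S (S n))).
      + apply psum_le_mono; [intros; left; auto|lia].
      + specialize (bnd n). pose proof (dp (S (S n))). pose proof (pos_INR (S (S n))).
        assert (0 <= 16 * INR (S (S n)) * d (S (S n))) by (apply Rmult_le_pos; lra). lra. }
  destruct Hf as [l Hl]. exists l. apply is_series_psum. exact Hl.
Qed.

Lemma a_coef_bounds N x : x ^ 2 <= 1 -> 0 <= a_coef N x <= alpha N.
Proof.
  intros Hx. rewrite a_coef_alpha. pose proof (alpha_pos N).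
  assert (0 <= x ^ 2) by (rewrite <- Rsqr_pow2; apply Rle_0_sqr).
  assert (0 <= (x ^ 2) ^ N <= 1).
  { split; [apply pow_le; lra|]. rewrite <- (pow1 N). apply pow_incr; lra. }
  nra.
Qed.

Lemma ex_series_a_coef_chain_weight l m x : List.Forall (fun k => (1 <= k)%nat) l ->
  x ^ 2 <= 1 -> ex_series (fun N => a_coef N x * chain_weight l m N).
Proof.
  intros Hl Hx. destruct (chain_weight_le_gamma l m Hl) as [B [HB HBN]].
  apply (@ex_series_le R_AbsRing R_CompleteNormedModule _ (fun N => B * (alpha N * gamma N))).
  - intros N. change (norm ?z) with (Rabs z).
    pose proof (a_coef_bounds N x Hx). pose proof (chain_weight_nonneg l m N).
    rewrite Rabs_pos_eq by (apply Rmult_le_pos; lra).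
    specialize (HBN N). pose proof (gamma_pos N). pose proof (alpha_pos N).
    apply Rle_trans with (alpha N * chain_weight l m N); [apply Rmult_le_compat_r; lra|].
    replace (B * (alpha N * gamma N)) with (alpha N * (B * gamma N)) by ring.
    apply Rmult_le_compat_l; lra.
  - exact (@ex_series_scal_l R_AbsRing R_NormedModule B _ ex_series_alpha_gamma).
Qed.

Lemma msum_rev_is_series l : List.Forall (fun k => (1 <= k)%nat) l -> forall m x, x ^ 2 <= 1 ->
  is_series (fun N => a_coef N x * chain_weight l m N) (msum_rev l x m).
Proof.
  induction l as [|s l IH]; intros Hl m x Hx.
  - simpl. replace (a_coef m x) with (a_coef m x * (if Nat.eqb m m then 1 else 0))
      by (rewrite Nat.eqb_refl; ring).
    apply (is_series_single (fun N => a_coef N x * (if Nat.eqb N m then 1 else 0))).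
    intros i Hi. destruct (Nat.eqb_spec i m); [lia|ring].
  - inversion Hl as [|? ? Hs Hl']; subst. specialize (IH Hl').
    set (g j N := a_coef N x * chain_weight l (m + 1 + j) N / (2 * INR (m + 1 + j)) ^ s).
    assert (diag : forall N, psum (fun j => g j N) (S N) = a_coef N x * chain_weight (s :: l) m N).
    { intros N. unfold g. simpl chain_weight. rewrite <- psum_scal.
      apply psum_ext. intros; unfold Rdiv; ring. }
    assert (Hex : ex_series (fun N => psum (fun j => g j N) (S N))).
    { eapply ex_series_ext; [intros N; symmetry; apply diag|].
      apply ex_series_a_coef_chain_weight; auto. }
    simpl msum_rev. erewrite is_series_unique.
    + eapply is_series_ext; [exact diag|]. apply Series_correct, Hex.
    + apply is_series_rows_Series_col; auto.
      * intros j N. unfold g. pose proof (a_coef_bounds N x Hx).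
        pose proof (chain_weight_nonneg l (m + 1 + j) N).
        apply Rdiv_le_0_compat; [apply Rmult_le_pos; lra|].
        apply pow_lt. assert (0 < INR (m + 1 + j)) by (apply lt_0_INR; lia). lra.
      * intros j N HN. unfold g. rewrite chain_weight_below by lia. unfold Rdiv; ring.
      * intros j. unfold g. specialize (IH (m + 1 + j)%nat x Hx).
        apply (is_series_scal_r (/ (2 * INR (m + 1 + j)) ^ s)) in IH. exact IH.
Qed.

(** * Power series in [sin^2] on the open interval [(-pi/2, pi/2)] *)

Definition in_halfpi (t : R) : Prop := - (PI / 2) < t < PI / 2.

Lemma in_halfpi_0 : in_halfpi 0.
Proof. unfold in_halfpi. pose proof PI_RGT_0. lra. Qed.

Lemma in_halfpi_between y x : in_halfpi y -> Rmin 0 y <= x <= Rmax 0 y -> in_halfpi x.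
Proof.
  unfold in_halfpi. intros H1 H2. pose proof PI_RGT_0.
  unfold Rmin, Rmax in H2. destruct (Rle_dec 0 y); lra.
Qed.

Lemma in_halfpi_locally t : in_halfpi t -> locally t in_halfpi.
Proof.
  intros [H1 H2].
  assert (He : 0 < Rmin (t + PI / 2) (PI / 2 - t)) by (apply Rmin_glb_lt; lra).
  exists (mkposreal _ He). intros u Hu. apply Rabs_def2 in Hu.
  pose proof (Rmin_l (t + PI / 2) (PI / 2 - t)). pose proof (Rmin_r (t + PI / 2) (PI / 2 - t)).
  unfold in_halfpi. simpl in *. unfold minus, plus, opp in Hu; simpl in Hu. lra.
Qed.

Lemma in_halfpi_cos_pos t : in_halfpi t -> 0 < cos t.
Proof. intros [H1 H2]. apply cos_gt_0; auto. Qed.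

Lemma in_halfpi_sin2_lt1 t : in_halfpi t -> 0 <= sin t ^ 2 < 1.
Proof.
  intros H. pose proof (in_halfpi_cos_pos t H). pose proof (sin2_cos2 t). unfold Rsqr in *.
  split; nra.
Qed.

Lemma in_halfpi_sin_neq0 t : in_halfpi t -> t <> 0 -> sin t <> 0.
Proof.
  intros [Ha Hb] H0 Hs. apply H0. apply sin_eq_0_0 in Hs as [k Hk]. subst t.
  pose proof PI_RGT_0.
  assert (Hk : -1 < IZR k < 1).
  { split; [apply Rmult_lt_reg_r with PI|apply Rmult_lt_reg_r with PI]; lra. }
  replace k with 0%Z by (destruct Hk as [Hk1 Hk2]; apply lt_IZR in Hk1, Hk2; lia).
  simpl. ring.
Qed.

Lemma continuous_of_is_derive (f : R -> R) (t l : R) : is_derive f t l -> continuous f t.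
Proof. intros H. apply (@ex_derive_continuous R_AbsRing R_NormedModule). exists l; auto. Qed.

Lemma continuous_Rmult (f g : R -> R) t :
  continuous f t -> continuous g t -> continuous (fun u => f u * g u) t.
Proof. intros. apply (continuous_mult (K := R_AbsRing)); auto. Qed.

Lemma continuous_Rplus (f g : R -> R) t :
  continuous f t -> continuous g t -> continuous (fun u => f u + g u) t.
Proof. intros. apply (continuous_plus (V := R_NormedModule)); auto. Qed.

Lemma continuous_tan t : in_halfpi t -> continuous tan t.
Proof.
  intros Ht. pose proof (in_halfpi_cos_pos t Ht).
  apply continuous_of_is_derive with (1 + tan t ^ 2).
  unfold tan. auto_derive; [lra|]. field. lra.
Qed.

Lemma continuous_secf t : in_halfpi t -> continuous secf t.
Proof.
  intros Ht. pose proof (in_halfpi_cos_pos t Ht).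
  apply continuous_of_is_derive with (sin t / cos t ^ 2).
  unfold secf. auto_derive; [lra|]. field. lra.
Qed.

Lemma continuous_cotf t : in_halfpi t -> t <> 0 -> continuous cotf t.
Proof.
  intros Ht H0. pose proof (in_halfpi_sin_neq0 t Ht H0).
  apply continuous_of_is_derive with (- 1 / sin t ^ 2). unfold cotf. auto_derive; auto.
  pose proof (sin2_cos2 t). unfold Rsqr in *. field_simplify; auto. rewrite <- H1. field. auto.
Qed.

Lemma continuous_cscf t : in_halfpi t -> t <> 0 -> continuous cscf t.
Proof.
  intros Ht H0. pose proof (in_halfpi_sin_neq0 t Ht H0).
  apply continuous_of_is_derive with (- cos t / sin t ^ 2).
  unfold cscf. auto_derive; auto. field. auto.
Qed.

Lemma ex_RInt_in_halfpi (f : R -> R) y :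
  in_halfpi y -> (forall t, in_halfpi t -> continuous f t) -> ex_RInt f 0 y.
Proof.
  intros Hy Hf. apply (@ex_RInt_continuous R_CompleteNormedModule).
  intros z Hz. apply Hf. eapply in_halfpi_between; eauto.
Qed.

Definition sinser (b : nat -> R) (y : R) : R := PSeries b (sin y ^ 2).

Definition lin_bounded (b : nat -> R) : Prop := forall N, Rabs (b N) <= INR (S N).

Definition radius_ge1 (b : nat -> R) : Prop := Rbar_le 1 (CV_radius b).

Lemma lin_bounded_radius_ge1 b : lin_bounded b -> radius_ge1 b.
Proof.
  intros Hb. unfold radius_ge1.
  set (c1 := fun _ : nat => 1).
  assert (H1 : Rbar_le 1 (CV_radius c1)).
  { destruct (CV_radius_bounded c1) as [Hub _]. apply Hub. exists 1. intros n.
    unfold c1. rewrite pow1, Rmult_1_l, Rabs_R1. lra. }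
  rewrite <- CV_radius_derive in H1.
  eapply Rbar_le_trans; [exact H1|].
  apply (is_lub_Rbar_subset (fun r => exists M, forall n, Rabs (b n * r ^ n) <= M)
    (fun r => exists M, forall n, Rabs (PS_derive c1 n * r ^ n) <= M));
    [|apply CV_radius_bounded|apply CV_radius_bounded].
  intros r [M HM]. exists M. intros n. specialize (HM n).
  unfold PS_derive, c1 in HM. rewrite Rmult_1_r in HM.
  rewrite Rabs_mult in *. apply Rle_trans with (2 := HM).
  apply Rmult_le_compat_r; [apply Rabs_pos|].
  rewrite (Rabs_pos_eq (INR (S n))) by apply pos_INR. auto.
Qed.

Lemma sin2_in_radius b t : radius_ge1 b -> in_halfpi t -> Rbar_lt (Rabs (sin t ^ 2)) (CV_radius b).
Proof.
  intros Hb Ht. apply Rbar_lt_le_trans with 1; auto.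
  simpl. pose proof (in_halfpi_sin2_lt1 t Ht). rewrite Rabs_pos_eq; lra.
Qed.

Lemma sinser_ex_pseries b t : radius_ge1 b -> in_halfpi t -> ex_pseries b (sin t ^ 2).
Proof. intros. apply CV_radius_inside, sin2_in_radius; auto. Qed.

Lemma sinser_0 b : sinser b 0 = b 0%nat.
Proof. unfold sinser. rewrite sin_0. replace (0 ^ 2) with 0 by ring. apply PSeries_0. Qed.

Lemma is_derive_sinser b y : radius_ge1 b -> in_halfpi y ->
  is_derive (sinser b) y (2 * sin y * cos y * PSeries (PS_derive b) (sin y ^ 2)).
Proof.
  intros Hb Hy. unfold sinser.
  assert (H := is_derive_comp (PSeries b) (fun t => sin t ^ 2) y _ (2 * sin y * cos y)
                 (is_derive_PSeries b _ (sin2_in_radius b y Hb Hy))).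
  simpl in H. unfold scal in H; simpl in H. unfold mult in H; simpl in H.
  apply H. auto_derive; auto. ring.
Qed.

Lemma continuous_sinser b y : radius_ge1 b -> in_halfpi y -> continuous (sinser b) y.
Proof. intros Hb Hy. eapply continuous_of_is_derive, is_derive_sinser; auto. Qed.

Definition div_2N_pow (j : nat) (e : nat -> R) (N : nat) : R := e N / (2 * INR N) ^ j.

Lemma lin_bounded_div_2N_pow j e : e 0%nat = 0 -> lin_bounded e -> lin_bounded (div_2N_pow j e).
Proof.
  intros H0 He N. unfold div_2N_pow. destruct N as [|N].
  - rewrite H0. unfold Rdiv. rewrite Rmult_0_l, Rabs_R0. simpl; lra.
  - assert (1 <= INR (S N)) by (apply (le_INR 1); lia).
    assert (1 <= (2 * INR (S N)) ^ j) by (apply pow_R1_Rle; lra).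
    unfold Rdiv. rewrite Rabs_mult, Rabs_inv, (Rabs_pos_eq ((2 * INR (S N)) ^ j)) by lra.
    apply Rle_trans with (Rabs (e (S N))); auto.
    rewrite <- (Rmult_1_r (Rabs (e (S N)))) at 2. apply Rmult_le_compat_l; [apply Rabs_pos|].
    rewrite <- Rinv_1. apply Rinv_le_contravar; lra.
Qed.

(* At [t = 0] this relies on the junk value [cotf 0 = 0], as [/ 0 = 0]. *)
Lemma cotf_mul_sinser e t : e 0%nat = 0 -> radius_ge1 e -> in_halfpi t ->
  cotf t * sinser e t = sin t * cos t * PSeries (PS_decr_1 e) (sin t ^ 2).
Proof.
  intros H0 He Ht. unfold cotf, sinser.
  destruct (Req_dec (sin t) 0) as [Hs|Hs].
  - rewrite Hs. replace (0 ^ 2) with 0 by ring. rewrite PSeries_0, H0. ring.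
  - rewrite PSeries_decr_1, H0 by (apply sinser_ex_pseries; auto). field. auto.
Qed.

Lemma continuous_cotf_mul_sinser e t : e 0%nat = 0 -> lin_bounded e -> in_halfpi t ->
  continuous (fun u => cotf u * sinser e u) t.
Proof.
  intros H0 He Ht. pose proof (lin_bounded_radius_ge1 e He).
  apply (continuous_ext_loc _ (fun u => sin u * cos u * PSeries (PS_decr_1 e) (sin u ^ 2))).
  - apply (filter_imp in_halfpi); [|apply in_halfpi_locally; auto].
    intros u Hu. symmetry. apply cotf_mul_sinser; auto.
  - apply continuous_Rmult; [apply continuous_Rmult; [apply continuous_sin|apply continuous_cos]|].
    apply (continuous_sinser (PS_decr_1 e)); auto.
    unfold radius_ge1. rewrite CV_radius_decr_1. auto.
Qed.

Lemma RInt_cotf_sinser e y : e 0%nat = 0 -> lin_bounded e -> in_halfpi y ->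
  RInt (fun t => cotf t * sinser e t) 0 y = sinser (div_2N_pow 1 e) y.
Proof.
  intros H0 He Hy. pose proof (lin_bounded_radius_ge1 _ He) as Re.
  assert (HG : is_RInt (fun t => cotf t * sinser e t) 0 y
                 (minus (sinser (div_2N_pow 1 e) y) (sinser (div_2N_pow 1 e) 0))).
  { apply (@is_RInt_derive R_CompleteNormedModule).
    - intros x Hx. assert (Ix := in_halfpi_between y x Hy Hx).
      assert (D := is_derive_sinser (div_2N_pow 1 e) x
                     (lin_bounded_radius_ge1 _ (lin_bounded_div_2N_pow 1 e H0 He)) Ix).
      eapply is_derive_ext; [intros; reflexivity|]. rewrite cotf_mul_sinser by auto.
      replace (sin x * cos x * PSeries (PS_decr_1 e) (sin x ^ 2))
        with (2 * sin x * cos x * PSeries (PS_derive (div_2N_pow 1 e)) (sin x ^ 2)); auto.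
      rewrite (PSeries_ext (PS_derive (div_2N_pow 1 e)) (PS_scal (/ 2) (PS_decr_1 e))).
      + rewrite PSeries_scal. field.
      + intros n. unfold PS_derive, div_2N_pow, PS_scal, PS_decr_1.
        change (scal (/ 2) (e (S n))) with (/ 2 * e (S n)).
        assert (0 < INR (S n)) by (apply lt_0_INR; lia). field. lra.
    - intros x Hx. apply continuous_cotf_mul_sinser; auto. eapply in_halfpi_between; eauto. }
  apply (@is_RInt_unique R_CompleteNormedModule) in HG. rewrite HG, sinser_0.
  unfold div_2N_pow. rewrite H0. unfold minus, plus, opp; simpl. unfold Rdiv. ring.
Qed.

(* [wcoef c] is chosen so that, writing [B], [S], [W] for the series of [bcoef c], [scoef c],
   [wcoef c] at [z = sin^2 y], [W / cos y] is a primitive of [sec tan B] and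
   [csc (W / cos) = tan B - cot S]: this is how the word [tan - csc o sec] acts. *)
Definition bcoef (c : nat -> R) (N : nat) : R := alpha N * c N.
Definition scoef (c : nat -> R) (N : nat) : R := alpha N * psum c N.
Definition wcoef (c : nat -> R) (N : nat) : R := alpha N * psum c N / (2 * INR N - 1).

Lemma ex_pseries_scal_R (a : nat -> R) c z : ex_pseries a z -> ex_pseries (PS_scal c a) z.
Proof. intros H. apply (ex_pseries_scal (V := R_NormedModule)); auto. unfold mult; simpl; ring. Qed.

Lemma ex_pseries_incr_1_R (a : nat -> R) z : ex_pseries a z -> ex_pseries (PS_incr_1 a) z.
Proof. intros H. apply (ex_pseries_incr_1 (V := R_NormedModule)). auto. Qed.

Lemma ex_pseries_plus_R (a b : nat -> R) z :
  ex_pseries a z -> ex_pseries b z -> ex_pseries (PS_plus a b) z.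
Proof. intros H1 H2. apply (ex_pseries_plus (V := R_NormedModule)); auto. Qed.

Lemma PSeries_wcoef c z : ex_pseries (bcoef c) z -> ex_pseries (scoef c) z ->
  PSeries (wcoef c) z = z * PSeries (bcoef c) z - (1 - z) * PSeries (scoef c) z.
Proof.
  intros Hb Hs.
  replace (z * PSeries (bcoef c) z - (1 - z) * PSeries (scoef c) z)
    with (z * PSeries (bcoef c) z + (-1) * PSeries (scoef c) z + z * PSeries (scoef c) z) by ring.
  rewrite <- !PSeries_incr_1, <- PSeries_scal.
  rewrite <- (PSeries_plus (PS_incr_1 (bcoef c)) (PS_scal (-1) (scoef c))).
  2: apply ex_pseries_incr_1_R; auto.
  2: apply ex_pseries_scal_R; auto.
  rewrite <- PSeries_plus.
  2: apply ex_pseries_plus_R; [apply ex_pseries_incr_1_R|apply ex_pseries_scal_R]; auto.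
  2: apply ex_pseries_incr_1_R; auto.
  apply PSeries_ext. intros n. unfold PS_plus, PS_scal, PS_incr_1.
  unfold plus, zero, scal; simpl; unfold mult; simpl.
  destruct n as [|n].
  - unfold wcoef, scoef. rewrite psum_0. unfold Rdiv. ring.
  - unfold wcoef, bcoef, scoef. rewrite psum_S, alpha_S, S_INR. pose proof (pos_INR n).
    field. split; intro; lra.
Qed.

Lemma PSeries_wcoef_ode c z : ex_pseries (wcoef c) z -> ex_pseries (PS_derive (wcoef c)) z ->
  2 * (1 - z) * PSeries (PS_derive (wcoef c)) z + PSeries (wcoef c) z = PSeries (bcoef c) z.
Proof.
  intros Hw Hd. set (w' := PS_derive (wcoef c)).
  replace (2 * (1 - z) * PSeries w' z + PSeries (wcoef c) z)
    with (2 * PSeries w' z + (-2) * (z * PSeries w' z) + PSeries (wcoef c) z) by ring.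
  rewrite <- (PSeries_incr_1 w'), <- (PSeries_scal 2 w'), <- (PSeries_scal (-2) (PS_incr_1 w')).
  rewrite <- (PSeries_plus (PS_scal 2 w') (PS_scal (-2) (PS_incr_1 w'))).
  2: apply ex_pseries_scal_R; auto.
  2: apply ex_pseries_scal_R, ex_pseries_incr_1_R; auto.
  rewrite <- PSeries_plus; auto.
  2: apply ex_pseries_plus_R; apply ex_pseries_scal_R; auto; apply ex_pseries_incr_1_R; auto.
  apply PSeries_ext. intros n. unfold w', PS_plus, PS_scal, PS_incr_1, PS_derive.
  destruct n as [|n]; [|rewrite !S_INR];
    unfold plus, zero, scal; simpl; unfold mult; simpl; unfold wcoef, bcoef.
  - rewrite psum_S, psum_0, alpha_S, alpha_0. simpl INR. field.
  - rewrite !psum_S, (alpha_S (S n)), !S_INR. pose proof (pos_INR n).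
    field. repeat split; intro; lra.
Qed.

Lemma lin_bounded_bcoef c : (forall i, Rabs (c i) <= 1) -> lin_bounded (bcoef c).
Proof.
  intros H N. unfold bcoef. rewrite Rabs_mult. pose proof (alpha_pos N). pose proof (alpha_le1 N).
  rewrite Rabs_pos_eq by lra. specialize (H N). pose proof (Rabs_pos (c N)).
  assert (1 <= INR (S N)) by (apply (le_INR 1); lia). nra.
Qed.

Lemma lin_bounded_scoef c : (forall i, Rabs (c i) <= 1) -> lin_bounded (scoef c).
Proof.
  intros H N. unfold scoef. rewrite Rabs_mult. pose proof (alpha_pos N). pose proof (alpha_le1 N).
  rewrite Rabs_pos_eq by lra. pose proof (psum_abs_le1 c N H). pose proof (Rabs_pos (psum c N)).
  rewrite S_INR. pose proof (pos_INR N). nra.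
Qed.

Lemma lin_bounded_wcoef c : (forall i, Rabs (c i) <= 1) -> lin_bounded (wcoef c).
Proof.
  intros H N. unfold wcoef. destruct N as [|N].
  - rewrite psum_0. unfold Rdiv. rewrite Rmult_0_r, Rmult_0_l, Rabs_R0. simpl; lra.
  - pose proof (alpha_pos (S N)). pose proof (alpha_le1 (S N)).
    pose proof (psum_abs_le1 c (S N) H). pose proof (Rabs_pos (psum c (S N))).
    assert (1 <= INR (S N)) by (apply (le_INR 1); lia).
    unfold Rdiv. rewrite !Rabs_mult, Rabs_inv, (Rabs_pos_eq (alpha _)) by lra.
    rewrite (Rabs_pos_eq (2 * INR (S N) - 1)) by lra.
    apply Rle_trans with 1; [|rewrite S_INR; lra].
    apply Rmult_le_reg_r with (2 * INR (S N) - 1); [lra|].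
    rewrite Rmult_assoc, Rinv_l by lra.
    assert (0 <= (1 - alpha (S N)) * Rabs (psum c (S N))) by (apply Rmult_le_pos; lra).
    nra.
Qed.

Section OneStep.

Variable c : nat -> R.
Hypothesis c_le1 : forall i, Rabs (c i) <= 1.

Let radius_bcoef := lin_bounded_radius_ge1 _ (lin_bounded_bcoef c c_le1).
Let radius_scoef := lin_bounded_radius_ge1 _ (lin_bounded_scoef c c_le1).
Let radius_wcoef := lin_bounded_radius_ge1 _ (lin_bounded_wcoef c c_le1).

Lemma scoef_0 : scoef c 0%nat = 0.
Proof. unfold scoef. rewrite psum_0. ring. Qed.

Lemma is_derive_sinser_wcoef_div_cos x : in_halfpi x ->
  is_derive (fun t => sinser (wcoef c) t / cos t) x (secf x * (tan x * sinser (bcoef c) x)).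
Proof.
  intros Ix. pose proof (in_halfpi_cos_pos x Ix).
  assert (radius_wcoef_derive : radius_ge1 (PS_derive (wcoef c))).
  { unfold radius_ge1. rewrite CV_radius_derive. exact radius_wcoef. }
  assert (D1 := is_derive_sinser (wcoef c) x radius_wcoef Ix).
  assert (D2 : is_derive (fun t => / cos t) x (sin x / cos x ^ 2)).
  { auto_derive; [lra|]. field. lra. }
  assert (D := is_derive_mult _ _ _ _ _ D1 D2 ltac:(intros; apply Rmult_comm)).
  simpl in D. unfold mult, plus in D; simpl in D.
  replace (secf x * (tan x * sinser (bcoef c) x)) with
    (2 * sin x * cos x * PSeries (PS_derive (wcoef c)) (sin x ^ 2) * / cos x +
     sinser (wcoef c) x * (sin x / cos x ^ 2)); [exact D|].
  unfold sinser, secf, tan.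
  rewrite <- (PSeries_wcoef_ode c (sin x ^ 2)) by (apply sinser_ex_pseries; auto).
  pose proof (sin2_cos2 x). unfold Rsqr in *.
  replace (1 - sin x ^ 2) with (cos x ^ 2) by (simpl; lra).
  field. lra.
Qed.

Lemma RInt_secf_tan_sinser t : in_halfpi t ->
  RInt (fun u => secf u * (tan u * sinser (bcoef c) u)) 0 t = sinser (wcoef c) t / cos t.
Proof.
  intros Ht.
  assert (H : is_RInt (fun u => secf u * (tan u * sinser (bcoef c) u)) 0 t
               (minus (sinser (wcoef c) t / cos t) (sinser (wcoef c) 0 / cos 0))).
  { apply (@is_RInt_derive R_CompleteNormedModule (fun t => sinser (wcoef c) t / cos t)).
    - intros x Hx. apply is_derive_sinser_wcoef_div_cos. eapply in_halfpi_between; eauto.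
    - intros x Hx. assert (Ix := in_halfpi_between t x Ht Hx).
      apply continuous_Rmult; [apply continuous_secf; auto|].
      apply continuous_Rmult; [apply continuous_tan|apply continuous_sinser]; auto. }
  apply (@is_RInt_unique R_CompleteNormedModule) in H. rewrite H.
  rewrite sinser_0. unfold minus, plus, opp, wcoef; simpl. rewrite psum_0. unfold Rdiv. ring.
Qed.

Lemma cscf_mul_sinser_wcoef t : in_halfpi t ->
  cscf t * (sinser (wcoef c) t / cos t) = tan t * sinser (bcoef c) t - cotf t * sinser (scoef c) t.
Proof.
  intros Ht. pose proof (in_halfpi_cos_pos t Ht).
  unfold cscf, cotf, tan, sinser. destruct (Req_dec (sin t) 0) as [Hs|Hs].
  - rewrite Hs. replace (0 ^ 2) with 0 by ring.
    rewrite !PSeries_0. unfold wcoef, scoef. rewrite psum_0. unfold Rdiv. ring.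
  - rewrite PSeries_wcoef by (apply sinser_ex_pseries; auto).
    pose proof (sin2_cos2 t). unfold Rsqr in *.
    replace (1 - sin t ^ 2) with (cos t ^ 2) by (simpl; lra).
    field. split; lra.
Qed.

Lemma RInt_tan_sub_cscf_secf t : in_halfpi t ->
  RInt (fun u => tan u * sinser (bcoef c) u) 0 t
  - RInt (fun u => cscf u * RInt (fun v => secf v * (tan v * sinser (bcoef c) v)) 0 u) 0 t
  = sinser (div_2N_pow 1 (scoef c)) t.
Proof.
  intros Ht.
  rewrite <- (RInt_cotf_sinser (scoef c) t scoef_0 (lin_bounded_scoef c c_le1) Ht).
  rewrite (RInt_ext (fun u => cscf u * RInt (fun v => secf v * (tan v * sinser (bcoef c) v)) 0 u)
                    (fun u => tan u * sinser (bcoef c) u - cotf u * sinser (scoef c) u)).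
  2:{ intros x Hx. cbv beta. assert (Ix : in_halfpi x) by (apply (in_halfpi_between t x Ht); lra).
      rewrite RInt_secf_tan_sinser by auto. apply cscf_mul_sinser_wcoef; auto. }
  rewrite (RInt_minus (V := R_CompleteNormedModule)); [unfold minus, plus, opp; simpl; ring| |].
  - apply ex_RInt_in_halfpi; auto. intros u Hu.
    apply continuous_Rmult; [apply continuous_tan|apply continuous_sinser]; auto.
  - apply ex_RInt_in_halfpi; auto. intros u Hu.
    apply continuous_cotf_mul_sinser; auto using scoef_0, lin_bounded_scoef.
Qed.

End OneStep.

(** * Iterated integrals of regular words *)

Lemma abs_RInt_0_le (phi : R -> R) u M : ex_RInt phi 0 u ->
  (forall s, Rmin 0 u <= s <= Rmax 0 u -> Rabs (phi s) <= M) -> Rabs (RInt phi 0 u) <= Rabs u * M.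
Proof.
  intros He Hb. rewrite <- (Rminus_0_r u) at 2.
  apply (norm_RInt_le_const_abs (V := R_NormedModule) phi 0 u); auto.
  apply (RInt_correct (V := R_CompleteNormedModule)). exact He.
Qed.

Lemma sin_abs_ge_half u : Rabs u <= 1 -> Rabs u / 2 <= Rabs (sin u).
Proof.
  assert (Hpos : forall v, 0 <= v <= 1 -> v / 2 <= sin v).
  { intros v Hv. pose proof PI2_1.
    destruct (sin_bound v 0 ltac:(lra) ltac:(lra)) as [H1 _].
    unfold sin_approx, sin_term in H1. simpl in H1.
    assert (v * v * v <= v) by nra. lra. }
  intros H. destruct (Rle_dec 0 u).
  - rewrite Rabs_pos_eq in * by auto. pose proof (Hpos u (conj r H)). rewrite Rabs_pos_eq; lra.
  - rewrite Rabs_left in * by lra. pose proof (Hpos (- u) ltac:(lra)).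
    rewrite sin_neg in *. rewrite Rabs_left1; lra.
Qed.

(* [int_0^u phi = o(u)] while [f u = O(1 / u)]. *)
Lemma continuous_singular_mul_RInt (f phi : R -> R) :
  (forall u, Rabs (f u * sin u) <= 1) ->
  (forall t, in_halfpi t -> continuous phi t) -> phi 0 = 0 ->
  continuous (fun u => f u * RInt phi 0 u) 0.
Proof.
  intros Hf Hphi Hphi0. apply filterlim_locally. intros eps.
  assert (He4 : 0 < eps / 4) by (destruct eps; simpl; lra).
  destruct (proj1 (filterlim_locally (F := locally 0) phi (phi 0)) (Hphi 0 in_halfpi_0)
              (mkposreal _ He4)) as [d1 Hd1].
  assert (Hd : 0 < Rmin d1 1) by (apply Rmin_glb_lt; [destruct d1; simpl; lra|lra]).
  exists (mkposreal _ Hd). intros u Hu. simpl in Hu.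
  unfold ball in *; simpl in *. unfold AbsRing_ball, abs, minus, plus, opp in *; simpl in *.
  rewrite RInt_point, Rmult_0_r, Ropp_0, Rplus_0_r. rewrite Ropp_0, Rplus_0_r in Hu.
  pose proof (Rmin_l d1 1). pose proof (Rmin_r d1 1). pose proof PI2_1.
  assert (Iu : in_halfpi u) by (unfold in_halfpi; apply Rabs_def2 in Hu; lra).
  assert (Hint : Rabs (RInt phi 0 u) <= Rabs u * (eps / 4)).
  { apply abs_RInt_0_le; [apply ex_RInt_in_halfpi; auto|].
    intros s Hs. assert (Hs' : Rabs (s + - 0) < d1).
    { rewrite Ropp_0, Rplus_0_r. unfold Rmin, Rmax in Hs.
      destruct (Rle_dec 0 u); apply Rabs_def1; apply Rabs_def2 in Hu; lra. }
    specialize (Hd1 s Hs'). rewrite Hphi0, Ropp_0, Rplus_0_r in Hd1. lra. }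
  pose proof (sin_abs_ge_half u ltac:(lra)). specialize (Hf u). rewrite Rabs_mult in *.
  pose proof (Rabs_pos (f u)). pose proof (Rabs_pos u).
  assert (Hfu : Rabs (f u) * Rabs u <= 2) by nra.
  apply Rle_lt_trans with (Rabs (f u) * (Rabs u * (eps / 4))); [apply Rmult_le_compat_l; auto|].
  destruct eps as [e epos]; simpl in *. nra.
Qed.

Definition word_integrand (w : list (R -> R)) (t : R) : R :=
  match w with [] => 0 | f :: w' => f t * iint w' t end.

Definition regular_word (w : list (R -> R)) : Prop :=
  w <> [] /\ (forall t, in_halfpi t -> continuous (word_integrand w) t) /\ word_integrand w 0 = 0.

Lemma iint_RInt w y : w <> [] -> iint w y = RInt (word_integrand w) 0 y.
Proof. destruct w; [congruence|reflexivity]. Qed.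

Lemma iint_0 w : w <> [] -> iint w 0 = 0.
Proof. intros H. rewrite iint_RInt by auto. apply (RInt_point (V := R_CompleteNormedModule)). Qed.

Lemma is_derive_iint w y : regular_word w -> in_halfpi y ->
  is_derive (iint w) y (word_integrand w y).
Proof.
  intros [Hne [Hc _]] Hy.
  apply (is_derive_ext (fun y => RInt (word_integrand w) 0 y)).
  { intros; symmetry; apply iint_RInt; auto. }
  apply (is_derive_RInt (V := R_CompleteNormedModule) _ _ 0 y); [|apply Hc; auto].
  apply (filter_imp in_halfpi); [|apply in_halfpi_locally; auto].
  intros b Hb. apply (RInt_correct (V := R_CompleteNormedModule)), ex_RInt_in_halfpi; auto.
Qed.

Lemma continuous_iint w y : regular_word w -> in_halfpi y -> continuous (iint w) y.
Proof. intros. eapply continuous_of_is_derive, is_derive_iint; eauto. Qed.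

Lemma regular_cons (f : R -> R) w :
  (forall t, in_halfpi t -> continuous f t) -> regular_word w -> regular_word (f :: w).
Proof.
  intros Hf Hw. split; [discriminate|split].
  - intros t Ht. apply continuous_Rmult; [auto|apply continuous_iint; auto].
  - simpl. rewrite iint_0 by apply Hw. ring.
Qed.

Lemma regular_cons_singular (f : R -> R) w : (forall u, Rabs (f u * sin u) <= 1) ->
  (forall u, in_halfpi u -> u <> 0 -> continuous f u) -> regular_word w -> regular_word (f :: w).
Proof.
  intros Hb Hf Hw. split; [discriminate|split].
  - intros t Ht. destruct (Req_dec t 0) as [->|Ht0].
    + apply (continuous_ext (fun u => f u * RInt (word_integrand w) 0 u)).
      { intros u. simpl. rewrite iint_RInt by apply Hw. reflexivity. }
      apply continuous_singular_mul_RInt; auto; apply Hw.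
    + apply continuous_Rmult; [auto|apply continuous_iint; auto].
  - simpl. rewrite iint_0 by apply Hw. ring.
Qed.

Lemma regular_tan w : regular_word w -> regular_word (tan :: w).
Proof. apply regular_cons. apply continuous_tan. Qed.

Lemma regular_cotf w : regular_word w -> regular_word (cotf :: w).
Proof.
  apply regular_cons_singular; [|apply continuous_cotf].
  intros u. unfold cotf. destruct (Req_dec (sin u) 0) as [H|H].
  - rewrite H, Rmult_0_r, Rabs_R0; lra.
  - replace (cos u / sin u * sin u) with (cos u) by (field; auto).
    pose proof (COS_bound u). apply Rabs_le; lra.
Qed.

Lemma regular_cscf w : regular_word w -> regular_word (cscf :: w).
Proof.
  apply regular_cons_singular; [|apply continuous_cscf].
  intros u. unfold cscf. destruct (Req_dec (sin u) 0) as [H|H].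
  - rewrite H, Rmult_0_r, Rabs_R0; lra.
  - rewrite Rinv_l, Rabs_R1 by auto. lra.
Qed.

Lemma word_integrand_mulhead g w t : word_integrand (mulhead g w) t = g t * word_integrand w t.
Proof. destruct w; simpl; ring. Qed.

Lemma regular_mulhead_secf w : regular_word w -> regular_word (mulhead secf w).
Proof.
  intros [Hne [Hc H0]]. split; [destruct w; simpl; congruence|split].
  - intros t Ht. apply (continuous_ext (fun u => secf u * word_integrand w u)).
    { intros u. symmetry. apply word_integrand_mulhead. }
    apply continuous_Rmult; [apply continuous_secf|apply Hc]; auto.
  - rewrite word_integrand_mulhead, H0. ring.
Qed.

Definition lin_integrand (L : list (R * list (R -> R))) (t : R) : R :=
  fold_right (fun cw acc => fst cw * word_integrand (snd cw) t + acc) 0 L.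

Definition regular_comb (L : list (R * list (R -> R))) : Prop :=
  List.Forall (fun cw => regular_word (snd cw)) L.

Lemma lin_iint_nil y : lin_iint [] y = 0.
Proof. reflexivity. Qed.

Lemma lin_iint_cons cw L y : lin_iint (cw :: L) y = fst cw * iint (snd cw) y + lin_iint L y.
Proof. reflexivity. Qed.

Lemma lin_iint_app L1 L2 t : lin_iint (L1 ++ L2) t = lin_iint L1 t + lin_iint L2 t.
Proof.
  induction L1 as [|cw L1 IH]; [rewrite app_nil_l, lin_iint_nil; ring|].
  rewrite <- app_comm_cons, !lin_iint_cons, IH; ring.
Qed.

Lemma lin_iint_0 L : regular_comb L -> lin_iint L 0 = 0.
Proof.
  intros HL. induction HL as [|cw L Hw HL IH]; auto.
  rewrite lin_iint_cons, IH, iint_0 by apply Hw. ring.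
Qed.

Lemma continuous_lin_integrand L t : regular_comb L -> in_halfpi t ->
  continuous (lin_integrand L) t.
Proof.
  intros HL Ht. induction HL as [|cw L Hw HL IH]; simpl; [apply continuous_const|].
  apply continuous_Rplus; auto. apply continuous_Rmult; [apply continuous_const|apply Hw; auto].
Qed.

Lemma is_derive_lin_iint L y : regular_comb L -> in_halfpi y ->
  is_derive (lin_iint L) y (lin_integrand L y).
Proof.
  intros HL Hy. induction HL as [|cw L Hw HL IH]; simpl.
  - apply (is_derive_const (K := R_AbsRing) (V := R_NormedModule)).
  - apply (is_derive_plus (K := R_AbsRing) (V := R_NormedModule)
             (fun y => fst cw * iint (snd cw) y) (lin_iint L)); auto.
    apply (is_derive_scal (fun y => iint (snd cw) y) y (fst cw)). apply is_derive_iint; auto.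
Qed.

Lemma lin_iint_RInt L y : regular_comb L -> in_halfpi y ->
  lin_iint L y = RInt (lin_integrand L) 0 y.
Proof.
  intros HL Hy.
  assert (H : is_RInt (lin_integrand L) 0 y (minus (lin_iint L y) (lin_iint L 0))).
  { apply (@is_RInt_derive R_CompleteNormedModule); intros x Hx;
      [apply is_derive_lin_iint|apply continuous_lin_integrand]; eauto using in_halfpi_between. }
  apply (@is_RInt_unique R_CompleteNormedModule) in H. rewrite H, lin_iint_0 by auto.
  unfold minus, plus, opp; simpl. ring.
Qed.

Definition prefix (f : R -> R) (L : list (R * list (R -> R))) : list (R * list (R -> R)) :=
  map (fun cw => (fst cw, f :: snd cw)) L.

Lemma lin_integrand_prefix f L t : lin_integrand (prefix f L) t = f t * lin_iint L t.
Proof.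
  induction L as [|cw L IH]; [simpl; ring|].
  change (lin_integrand (prefix f (cw :: L)) t)
    with (fst cw * (f t * iint (snd cw) t) + lin_integrand (prefix f L) t).
  rewrite IH, lin_iint_cons. ring.
Qed.

Lemma regular_prefix f L :
  (forall w, regular_word w -> regular_word (f :: w)) -> regular_comb L ->
  regular_comb (prefix f L).
Proof. intros Hf HL. induction HL; simpl; constructor; simpl; auto. Qed.

Definition mulsec (L : list (R * list (R -> R))) : list (R * list (R -> R)) :=
  map (fun cw => (fst cw, mulhead secf (snd cw))) L.

Lemma lin_integrand_mulsec L t : lin_integrand (mulsec L) t = secf t * lin_integrand L t.
Proof.
  induction L as [|cw L IH]; simpl; [ring|].
  simpl in IH. rewrite IH, word_integrand_mulhead. ring.
Qed.

Lemma regular_mulsec L : regular_comb L -> regular_comb (mulsec L).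
Proof. intros HL. induction HL; simpl; constructor; auto. apply regular_mulhead_secf; auto. Qed.

Definition negcsc (L : list (R * list (R -> R))) : list (R * list (R -> R)) :=
  map (fun cw => (- fst cw, cscf :: mulhead secf (snd cw))) L.

Lemma lin_iint_negcsc L y : lin_iint (negcsc L) y = - lin_iint (prefix cscf (mulsec L)) y.
Proof.
  induction L as [|cw L IH]; [simpl; ring|].
  change (negcsc (cw :: L)) with ((- fst cw, cscf :: mulhead secf (snd cw)) :: negcsc L).
  change (prefix cscf (mulsec (cw :: L)))
    with ((fst cw, cscf :: mulhead secf (snd cw)) :: prefix cscf (mulsec L)).
  rewrite !lin_iint_cons, IH. simpl. ring.
Qed.

Lemma regular_negcsc L : regular_comb L -> regular_comb (negcsc L).
Proof.
  intros HL. induction HL; simpl; constructor; auto. apply regular_cscf, regular_mulhead_secf; auto.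
Qed.

Definition cot_prefix (j : nat) (L : list (R * list (R -> R))) : list (R * list (R -> R)) :=
  map (fun cw => (fst cw, repeat cotf j ++ snd cw)) L.

Lemma cot_prefix_0 L : cot_prefix 0 L = L.
Proof. unfold cot_prefix. simpl. induction L as [|[c w] L IH]; simpl; congruence. Qed.

Lemma cot_prefix_S j L : cot_prefix (S j) L = prefix cotf (cot_prefix j L).
Proof. unfold cot_prefix, prefix. rewrite map_map. reflexivity. Qed.

Lemma regular_cot_prefix j L : regular_comb L -> regular_comb (cot_prefix j L).
Proof.
  intros HL. induction j; [rewrite cot_prefix_0; auto|].
  rewrite cot_prefix_S. apply regular_prefix; auto. apply regular_cotf.
Qed.

Lemma expand_cons k s g :
  expand (k :: s) g = prefix tan (cot_prefix (k - 1) (expand s g ++ negcsc (expand s g))).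
Proof.
  cbn [expand]. unfold prefix, cot_prefix, negcsc. rewrite !map_app, !map_map. reflexivity.
Qed.

(** * The words of [p_(s_1) o ... o p_(s_d)] *)

Fixpoint cot_RInt_iter (j : nat) (F : R -> R) (y : R) : R :=
  match j with O => F y | S j' => RInt (fun t => cotf t * cot_RInt_iter j' F t) 0 y end.

Lemma cot_RInt_iter_ext j F G y :
  (forall t, in_halfpi t -> F t = G t) -> in_halfpi y -> cot_RInt_iter j F y = cot_RInt_iter j G y.
Proof.
  intros H. revert y; induction j; intros y Hy; simpl; auto.
  apply RInt_ext. intros x Hx. rewrite IHj; auto. apply (in_halfpi_between y x Hy); lra.
Qed.

Lemma lin_iint_cot_prefix L j y : regular_comb L -> in_halfpi y ->
  lin_iint (cot_prefix j L) y = cot_RInt_iter j (lin_iint L) y.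
Proof.
  intros HL. revert y. induction j; intros y Hy; [rewrite cot_prefix_0; reflexivity|].
  rewrite cot_prefix_S, lin_iint_RInt; auto.
  - simpl. apply RInt_ext. intros x Hx.
    rewrite lin_integrand_prefix, IHj; auto. apply (in_halfpi_between y x Hy). lra.
  - apply regular_prefix; [apply regular_cotf|apply regular_cot_prefix; auto].
Qed.

Lemma cot_RInt_iter_sinser j e y : e 0%nat = 0 -> lin_bounded e -> in_halfpi y ->
  cot_RInt_iter j (sinser e) y = sinser (div_2N_pow j e) y.
Proof.
  intros H0 He. revert y. induction j; intros y Hy.
  - simpl. unfold sinser. apply PSeries_ext. intros N. unfold div_2N_pow. simpl. field.
  - simpl. rewrite (RInt_ext _ (fun t => cotf t * sinser (div_2N_pow j e) t)).
    2:{ intros x Hx. rewrite IHj; auto. apply (in_halfpi_between y x Hy); lra. }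
    rewrite RInt_cotf_sinser; auto.
    + unfold sinser. apply PSeries_ext. intros N. unfold div_2N_pow. simpl pow.
      unfold Rdiv. rewrite Rmult_1_r, (Rinv_mult (2 * INR N) ((2 * INR N) ^ j)). ring.
    + unfold div_2N_pow. rewrite H0. unfold Rdiv; ring.
    + apply lin_bounded_div_2N_pow; auto.
Qed.

Definition derives_tan_sinser (L : list (R * list (R -> R))) (c : nat -> R) : Prop :=
  regular_comb L /\ forall t, in_halfpi t -> lin_integrand L t = tan t * sinser (bcoef c) t.

Lemma lin_iint_add_negcsc L c y : (forall i, Rabs (c i) <= 1) -> derives_tan_sinser L c ->
  in_halfpi y -> lin_iint (L ++ negcsc L) y = sinser (div_2N_pow 1 (scoef c)) y.
Proof.
  intros Hc [HL HLd] Hy.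
  rewrite lin_iint_app, lin_iint_negcsc, <- (RInt_tan_sub_cscf_secf c Hc y Hy).
  rewrite !lin_iint_RInt; auto.
  2: apply regular_prefix; [apply regular_cscf|apply regular_mulsec; auto].
  unfold Rminus. f_equal; [|f_equal]; apply RInt_ext; intros x Hx;
    assert (Ix : in_halfpi x) by (apply (in_halfpi_between y x Hy); lra); auto.
  rewrite lin_integrand_prefix, lin_iint_RInt by (auto; apply regular_mulsec; auto).
  f_equal. apply RInt_ext. intros v Hv.
  rewrite lin_integrand_mulsec, HLd; auto. apply (in_halfpi_between x v Ix); lra.
Qed.

(* The prefix is the factor [p_k = tan dt (cot dt)^(k-1) (1 - csc dt o sec)]. *)
Lemma derives_tan_sinser_step k L c : (1 <= k)%nat -> (forall i, Rabs (c i) <= 1) ->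
  derives_tan_sinser L c ->
  derives_tan_sinser (prefix tan (cot_prefix (k - 1) (L ++ negcsc L)))
                     (fun N => psum c N / (2 * INR N) ^ k).
Proof.
  intros Hk Hc HLd.
  assert (HL2 : regular_comb (L ++ negcsc L))
    by (apply Forall_app; split; [|apply regular_negcsc]; apply HLd).
  split.
  - apply regular_prefix; [apply regular_tan|apply regular_cot_prefix; auto].
  - intros t Ht. rewrite lin_integrand_prefix, lin_iint_cot_prefix by auto.
    rewrite (cot_RInt_iter_ext _ _ (sinser (div_2N_pow 1 (scoef c))))
      by (auto; intros; apply lin_iint_add_negcsc; auto).
    rewrite cot_RInt_iter_sinser; auto.
    + f_equal. unfold sinser. apply PSeries_ext. intros N.
      unfold div_2N_pow, scoef, bcoef. destruct k as [|k']; [lia|].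
      simpl Nat.sub. rewrite Nat.sub_0_r. simpl pow.
      unfold Rdiv. rewrite Rmult_1_r, (Rinv_mult (2 * INR N) ((2 * INR N) ^ k')). ring.
    + unfold div_2N_pow. rewrite scoef_0. unfold Rdiv; ring.
    + apply lin_bounded_div_2N_pow; [apply scoef_0|apply lin_bounded_scoef; auto].
Qed.

Lemma derives_tan_sinser_ext L c c' :
  (forall N, c N = c' N) -> derives_tan_sinser L c -> derives_tan_sinser L c'.
Proof.
  intros Hcc [HL HLd]. split; auto. intros t Ht. rewrite HLd by auto.
  f_equal. apply PSeries_ext. intros N. unfold bcoef. rewrite Hcc. reflexivity.
Qed.

Lemma derives_tan_sinser_a_coef n :
  derives_tan_sinser [(1, [fun t => a_coef n (sin t) * tan t])] (chain_weight [] n).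
Proof.
  split.
  - constructor; [|constructor]. split; [discriminate|split].
    + intros t Ht. apply continuous_Rmult; [|apply continuous_const].
      apply continuous_Rmult; [|apply continuous_tan; auto].
      unfold a_coef. eapply continuous_of_is_derive. auto_derive; auto.
    + simpl. rewrite tan_0. ring.
  - intros t Ht. simpl. unfold sinser, PSeries.
    rewrite (is_series_unique _ (bcoef (chain_weight [] n) n * (sin t ^ 2) ^ n)).
    + unfold bcoef. cbn [chain_weight]. rewrite Nat.eqb_refl, a_coef_alpha. ring.
    + apply (is_series_single (fun N => bcoef (chain_weight [] n) N * (sin t ^ 2) ^ N)).
      intros N HN. unfold bcoef. simpl. destruct (Nat.eqb_spec N n); [lia|ring].
Qed.

Lemma derives_tan_sinser_expand n s : List.Forall (fun k => (1 <= k)%nat) s ->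
  derives_tan_sinser (expand s (fun t => a_coef n (sin t) * tan t)) (chain_weight (rev s) n).
Proof.
  induction s as [|k s IH]; intros Hs; [apply derives_tan_sinser_a_coef|].
  inversion Hs as [|? ? Hk Hs']; subst.
  rewrite expand_cons.
  apply (derives_tan_sinser_ext _ (fun N => psum (chain_weight (rev s) n) N / (2 * INR N) ^ k)).
  { intros N. simpl rev. rewrite chain_weight_app. reflexivity. }
  apply derives_tan_sinser_step; auto.
  intros i. apply chain_weight_abs_le1, Forall_rev, Hs'.
Qed.

(** * The identity and its boundary values *)

Lemma msum_eq_sinser s n y : List.Forall (fun k => (1 <= k)%nat) s ->
  msum s (sin y) n = sinser (bcoef (chain_weight (rev s) n)) y.
Proof.
  intros Hs. assert (Hy : sin y ^ 2 <= 1) by (pose proof (sin2_cos2 y); unfold Rsqr in *; nra).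
  unfold msum. rewrite <- (is_series_unique _ _ (msum_rev_is_series _ (Forall_rev Hs) n _ Hy)).
  apply Series_ext. intros N. unfold bcoef. rewrite a_coef_alpha. ring.
Qed.

(* At [y = 0], [rhs] is [0] because [cotf 0 = 0] (as [/ 0 = 0]); this agrees with the
   multiple sum since [n_1 > n >= 0] forces the coefficient of [N = 0] to vanish. *)
Lemma rhs_eq_sinser s n y : s <> [] -> List.Forall (fun k => (1 <= k)%nat) s -> in_halfpi y ->
  rhs s n y = sinser (bcoef (chain_weight (rev s) n)) y.
Proof.
  intros Hne Hs Hy. destruct (derives_tan_sinser_expand n s Hs) as [HL HLd].
  unfold rhs. rewrite (is_derive_unique _ _ _ (is_derive_lin_iint _ y HL Hy)), HLd by auto.
  destruct (Req_dec y 0) as [->|H0].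
  - rewrite sinser_0. unfold bcoef. destruct s as [|k s]; [congruence|].
    simpl rev. rewrite chain_weight_app, psum_0, tan_0. unfold Rdiv. ring.
  - pose proof (in_halfpi_sin_neq0 y Hy H0). pose proof (in_halfpi_cos_pos y Hy).
    unfold cotf, tan. field. split; lra.
Qed.

Lemma filterlim_PSeries_at_left_1 b : radius_ge1 b -> ex_series b ->
  filterlim (PSeries b) (at_left 1) (locally (Series b)).
Proof.
  intros Hr Hex. rewrite <- PSeries_1.
  destruct (Rbar_le_lt_or_eq_dec _ _ Hr) as [Hlt|Heq].
  - apply (filterlim_filter_le_1 (F := locally 1)); [apply filter_le_within|].
    apply continuity_pt_filterlim, PSeries_continuity. rewrite Rabs_R1. exact Hlt.
  - replace 1 with (real (CV_radius b)) by (rewrite <- Heq; reflexivity).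
    apply Abel; rewrite <- Heq; simpl; [lra|exact I|apply ex_pseries_1; exact Hex].
Qed.

Lemma filterlim_sin2_at_left_1 F a : Filter F -> filter_le F (locally a) -> sin a ^ 2 = 1 ->
  F in_halfpi -> filterlim (fun y => sin y ^ 2) F (at_left 1).
Proof.
  intros HF Hle Ha HI P HP.
  assert (Hc : filterlim (fun y => sin y ^ 2) (locally a) (locally (sin a ^ 2))).
  { apply (continuous_of_is_derive (fun y => sin y ^ 2) a (2 * sin a * cos a)).
    auto_derive; auto. ring. }
  rewrite Ha in Hc.
  assert (Hnear : locally a (fun y => sin y ^ 2 < 1 -> P (sin y ^ 2))) by exact (Hc _ HP).
  change (F (fun y => P (sin y ^ 2))).
  generalize (filter_and _ _ (Hle _ Hnear) HI). apply filter_imp.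
  intros y [H1 H2]. apply H1, in_halfpi_sin2_lt1, H2.
Qed.

Lemma filterlim_sinser_endpoint b F a : Filter F -> filter_le F (locally a) -> sin a ^ 2 = 1 ->
  F in_halfpi -> lin_bounded b -> ex_series b -> filterlim (sinser b) F (locally (sinser b a)).
Proof.
  intros HF Hle Ha HI Hb Hex. unfold sinser at 2. rewrite Ha, PSeries_1.
  apply (filterlim_comp _ _ _ (fun y => sin y ^ 2) (PSeries b) F (at_left 1)).
  - apply (filterlim_sin2_at_left_1 _ a); auto.
  - apply filterlim_PSeries_at_left_1; auto. apply lin_bounded_radius_ge1; auto.
Qed.

Lemma at_left_halfpi : at_left (PI / 2) in_halfpi.
Proof.
  exists (mkposreal _ PI_RGT_0). intros y Hy Hlt. apply Rabs_def2 in Hy.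
  unfold in_halfpi. simpl in *. unfold minus, plus, opp in Hy; simpl in Hy. lra.
Qed.

Lemma at_right_halfpi : at_right (- (PI / 2)) in_halfpi.
Proof.
  exists (mkposreal _ PI_RGT_0). intros y Hy Hlt. apply Rabs_def2 in Hy.
  unfold in_halfpi. simpl in *. unfold minus, plus, opp in Hy; simpl in Hy. lra.
Qed.

Lemma ex_series_bcoef_chain_weight l n : List.Forall (fun k => (1 <= k)%nat) l ->
  ex_series (bcoef (chain_weight l n)).
Proof.
  intros Hl. eapply ex_series_ext; [|apply (ex_series_a_coef_chain_weight l n 1 Hl); lra].
  intros N. unfold bcoef. rewrite a_coef_alpha, !pow1, Rmult_1_r. reflexivity.
Qed.

Lemma filterlim_rhs_endpoint s n F a : s <> [] -> List.Forall (fun k => (1 <= k)%nat) s ->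
  Filter F -> filter_le F (locally a) -> sin a ^ 2 = 1 -> F in_halfpi ->
  filterlim (rhs s n) F (locally (msum s (sin a) n)).
Proof.
  intros Hne Hs HF Hle Ha HI. rewrite msum_eq_sinser by auto.
  apply (filterlim_ext_loc (sinser (bcoef (chain_weight (rev s) n)))).
  - apply (filter_imp in_halfpi); auto. intros y Hy. symmetry. apply rhs_eq_sinser; auto.
  - apply filterlim_sinser_endpoint; auto.
    + apply lin_bounded_bcoef. intros i. apply chain_weight_abs_le1, Forall_rev, Hs.
    + apply ex_series_bcoef_chain_weight, Forall_rev, Hs.
Qed.

Theorem theorem2p1 :
  forall (n : nat) (s : list nat),
    s <> nil -> List.Forall (fun k => (1 <= k)%nat) s ->
    (forall y : R, - (PI / 2) < y < PI / 2 -> msum s (sin y) n = rhs s n y) /\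
    filterlim (rhs s n) (at_left (PI / 2)) (locally (msum s (sin (PI / 2)) n)) /\
    filterlim (rhs s n) (at_right (- (PI / 2))) (locally (msum s (sin (- (PI / 2))) n)).
Proof.
  intros n s Hne Hs. split; [|split].
  - intros y Hy. rewrite msum_eq_sinser, rhs_eq_sinser; auto.
  - apply filterlim_rhs_endpoint; auto.
    + exact _.
    + apply filter_le_within.
    + rewrite sin_PI2. ring.
    + apply at_left_halfpi.
  - apply filterlim_rhs_endpoint; auto.
    + exact _.
    + apply filter_le_within.
    + rewrite sin_neg, sin_PI2. ring.
    + apply at_right_halfpi.
Qed.
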